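(* Let $(\mathbf C,I)$ be an orthogonally based finite-type chain complex of real inner product spaces and let $M$ be an $(n,n-1)$-free Morse matching on it, with Morse retraction $\Phi:\mathbf C^M\to\mathbf C$, $\Psi:\mathbf C\to\mathbf C^M$. Then (1) $\Phi_n:\mathbf C_n^M\to\mathbf C_n$ and (2) $\Psi_{n-1}^\dagger:\mathbf C^M_{n-1}\to\mathbf C_{n-1}$ are the subspace inclusions, and hence isometries.
   Context: Based chain complex: chain complex $(\mathbf C,\partial)$ of finite-dimensional real inner product spaces $\mathbf C_n$, $n\ge0$, with disjoint finite index sets $I_n$ and $\mathbf C_n=\bigoplus_{\alpha\in I_n}C_\alpha$; orthogonally based means $C_\alpha\perp C_{\alpha'}$ for $\alpha\ne\alpha'$. $\partial_{\beta,\alpha}=\pi_\beta\partial_n i_\alpha$. Graph: edges $\alpha\to\beta$ when $\partial_{\beta,\alpha}\ne0$. Morse matching: edge set $M$ with each cell on at most one edge, $\partial_{\beta,\alpha}$ an isomorphism for $\alpha\to\beta\in M$, and ''directed path from $\alpha$ to $\beta$ in the graph with $M$ reversed'' a partial order on each $I_n$; $M^0$ = unmatched cells. $M$ is $(n,n-1)$-free if no edge of $M$ joins an $n$-cell to an $(n-1)$-cell. With $\Gamma_{\beta,\alpha}$ the sum over directed paths from $\alpha$ to $\beta$ in the reversed graph of composites of $\partial_{\sigma_{i+1},\sigma_i}$ (ordinary steps) and $-\partial_{\sigma_i,\sigma_{i+1}}^{-1}$ (reversed matched edges), trivial path giving the identity: $\mathbf C^M_n=\bigoplus_{\alpha\in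 I_n\cap M^0}C_\alpha$ (restricted inner product), $\Phi(x)=\sum_{\beta\in I_n}\Gamma_{\beta,\alpha}(x)$ for $x\in C_\alpha$, $\alpha\in M^0\cap I_n$, and $\Psi(x)=\sum_{\beta\in M^0\cap I_n}\Gamma_{\beta,\alpha}(x)$ for $x\in C_\alpha$, $\alpha\in I_n$. $\dagger$ denotes adjoint. *)

From HB Require Import structures.
From mathcomp Require Import all_boot all_order all_algebra.
From mathcomp Require Import boolp reals.
Import Order.TTheory GRing.Theory Num.Theory.
Local Open Scope ring_scope.

(* Data of a based chain complex of finite type of real inner product spaces *)
(*  - cells : the (disjoint) union of the index sets I_k                     *)
(*  - deg c = k  iff  c \in I_k ;  idx k = I_k (a finite duplicate-free list) *)
(*  - dim c = dim C_c ; an element of C_c is a column vector 'cV_(dim c),     *)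
(*  - bd b a = \partial_{b,a} = pi_b \partial i_a : C_a -> C_b               *)
(* C_k = (+)_{a in I_k} C_a, elements of C_k are families of blocks, and the *)
(* inner product on C_k is the ORTHOGONAL sum of the block inner products   *)
(* (this is what "orthogonally based" means).                                *)
Record based_data (R : realType) := BasedData {
  cell : eqType;
  deg : cell -> nat;
  idx : nat -> seq cell;
  dim : cell -> nat;
  gram : forall a : cell, 'M[R]_(dim a);
  bd : forall b a : cell, 'M[R]_(dim b, dim a)
}.
Arguments cell {R}. Arguments deg {R}. Arguments idx {R}. Arguments dim {R}.
Arguments gram {R}. Arguments bd {R}.

Section BasedComplex.
Variables (R : realType) (C : based_data R).
Local Notation cell := (cell C).
Local Notation deg := (deg C).
Local Notation I := (idx C).
Local Notation dim := (dim C).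
Local Notation bd := (bd C).

(* a chain: one block per cell (only the blocks of cells of the relevant    *)
(* degree matter)                                                           *)
Definition chain := forall a : cell, 'cV[R]_(dim a).

Definition ip {a : cell} (u v : 'cV[R]_(dim a)) : R := (u^T *m gram C a *m v) 0 0.

Definition index_sets : Prop :=
  (forall k, uniq (I k)) /\ (forall k c, (c \in I k) = (deg c == k)).

Definition inner_products : Prop :=
  forall a : cell, (gram C a)^T = gram C a /\
    (forall u : 'cV[R]_(dim a), u != 0 -> 0 < ip u u).

(* \partial maps C_k into C_{k-1} (and \partial_0 = 0) *)
Definition graded_boundary : Prop :=
  forall b a : cell, deg a != (deg b).+1 -> bd b a = 0.

Definition chain_complex : Prop :=
  forall c a : cell, \sum_(b <- I (deg a).-1) bd c b *m bd b a = 0.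

Definition based_complex : Prop :=
  [/\ index_sets, inner_products, graded_boundary & chain_complex].

Variable M : rel cell.  (* M a b : the edge a -> b of the graph is in M *)

Definition unmatched (a : cell) : bool := `[< forall c, ~ M a c /\ ~ M c a >].

Definition ipC (k : nat) (x y : chain) : R := \sum_(a <- I k) ip (x a) (y a).
Definition ipCM (k : nat) (x y : chain) : R :=
  \sum_(a <- I k | unmatched a) ip (x a) (y a).

Definition edge (a b : cell) : bool := bd b a != 0.

(* one step a -> c in the graph with the edges of M reversed *)
Definition rstep (a c : cell) : bool := (edge a c && ~~ M a c) || M c a.

Definition reach (a b : cell) : Prop :=
  exists p : seq cell, path rstep a p && (last a p == b).

Definition is_iso {m n : nat} (T : 'M[R]_(m, n)) : Prop :=
  exists T' : 'M[R]_(n, m), T' *m T = 1%:M /\ T *m T' = 1%:M.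

Definition partial_order_on (k : nat) : Prop :=
  [/\ forall a, a \in I k -> reach a a,
      forall a b c, a \in I k -> b \in I k -> c \in I k ->
                    reach a b -> reach b c -> reach a c &
      forall a b, a \in I k -> b \in I k -> reach a b -> reach b a -> a = b].

Definition morse_matching : Prop :=
  [/\ (forall a b, M a b -> edge a b),
      (* every cell lies on at most one edge of M *)
      (forall a b a' b', M a b -> M a' b' ->
           [|| a == a', a == b', b == a' | b == b'] -> a = a' /\ b = b'),
      (forall a b, M a b -> is_iso (bd b a)) &
      (forall k, partial_order_on k)].

Definition nn1_free (n : nat) : Prop :=
  forall a b, M a b -> ~ (deg a = n /\ deg b = n.-1).

(* sum over directed paths of length exactly m from a to b, in the graph     *)
(* with M reversed, of the composites of \partial_{s',s} (ordinary steps)   *)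
(* and -\partial_{s,s'}^{-1} (reversed matched edges).  For an invertible   *)
(* matrix, pinvmx is its inverse.                                           *)
Fixpoint pathsum (m : nat) (b a : cell) {struct m} : 'M[R]_(dim b, dim a) :=
  match m with
  | 0 => if a == b then conform_mx 0 (1%:M : 'M[R]_(dim a)) else 0
  | m'.+1 =>
      \sum_(c <- I (deg a).-1 | edge a c && ~~ M a c) pathsum m' b c *m bd c a
    + \sum_(c <- I (deg a).+1 | M c a) pathsum m' b c *m (- pinvmx (bd a c))
  end.

(* Every directed path (of the graph with M reversed, M Morse) between two   *)
(* cells of degree k is simple and stays in degrees k-1, k, k+1, hence has   *)
(* length < bound a; so Gamma is the sum over ALL directed paths.            *)
Definition bound (a : cell) : nat :=
  (size (I (deg a).-1) + size (I (deg a)) + size (I (deg a).+1)).+1.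

Definition Gamma (b a : cell) : 'M[R]_(dim b, dim a) :=
  \sum_(m < bound a) pathsum m b a.

Definition Phi (k : nat) (x : chain) : chain :=
  fun b => \sum_(a <- I k | unmatched a) Gamma b a *m x a.

Definition Psi (k : nat) (y : chain) : chain :=
  fun b => \sum_(a <- I k) Gamma b a *m y a.

Definition inclM (x : chain) : chain :=
  fun b => if unmatched b then x b else 0.

End BasedComplex.

Definition is_adjoint {X Y R : Type} (ipX : X -> X -> R) (ipY : Y -> Y -> R)
  (T : X -> Y) (S : Y -> X) : Prop :=
  forall x y, ipY (T x) y = ipX x (S y).

Arguments ip {R C a}.
Arguments unmatched {R C}.
Arguments ipC {R C}. Arguments ipCM {R C}.
Arguments based_complex {R}. Arguments morse_matching {R C}.
Arguments nn1_free {R C}. Arguments Phi {R C}. Arguments Psi {R C}.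
Arguments inclM {R C}. Arguments Gamma {R C}.
Arguments chain {R}.

(** Gamma_{b,a} is the trivial-path term (the identity if a = b, zero
    otherwise) plus the contributions of nontrivial paths, and it suffices
    that the latter vanish.  Ordinary steps lower the degree by one and
    reversed matched edges raise it by one; since M joins no n-cell to an
    (n-1)-cell, a path that has entered degrees <= n-1 never returns to
    degree n.  A path leaving an unmatched n-cell must first go down, so it
    never reaches an n-cell: Phi_n is the inclusion.  A nontrivial path from
    an (n-1)-cell stays in degrees <= n-1 and could only enter an (n-1)-cell
    b from degree n or through a matched edge at b; so for unmatched b the
    b-block of Psi_{n-1} y is y_b, i.e. Psi_{n-1}^dagger is the inclusion. *)
From mathcomp Require Import all_boot all_order all_algebra.
From mathcomp Require Import boolp reals zify.
Import GRing.Theory.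
Local Open Scope ring_scope.

Section PathSums.
Context {R : realType} {C : based_data R} {M : rel (cell C)}.
Local Notation pathsum := (pathsum R C M).
Local Notation rstep := (rstep R C M).

Lemma pathsumS_eq0 m b a :
  (forall c, rstep a c -> pathsum m b c = 0) -> pathsum m.+1 b a = 0.
Proof.
move=> succ0 /=; rewrite !big1 ?addr0 // => c.
- by move=> Mca; rewrite succ0 ?mul0mx // /rstep Mca orbT.
- by move=> edge_ac; rewrite succ0 ?mul0mx // /rstep edge_ac.
Qed.

Lemma pathsum_closed_eq0 (P : cell C -> Prop) b :
  (forall c c', P c -> rstep c c' -> P c') -> ~ P b ->
  forall m c, P c -> pathsum m b c = 0.
Proof.
move=> closedP notPb; elim=> [|m IHm] c Pc /=.
  by case: eqP => // eq_cb; case: notPb; rewrite -eq_cb.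
by apply: pathsumS_eq0 => c' step_cc'; apply: IHm; apply: closedP step_cc'.
Qed.

Lemma pathsum_trivial_only (P : cell C -> Prop) b a :
  (forall c c', P c -> rstep c c' -> P c') -> ~ P b ->
  (forall c, rstep a c -> P c) -> forall m, pathsum m.+1 b a = 0.
Proof.
move=> closedP notPb succP m; apply: pathsumS_eq0 => c step_ac.
exact: pathsum_closed_eq0 closedP notPb m c (succP c step_ac).
Qed.

Lemma Gamma_trivial_only b a :
  (forall m, pathsum m.+1 b a = 0) -> Gamma M b a = pathsum 0 b a.
Proof.
move=> triv; rewrite /Gamma /bound big_ord_recl big1 ?addr0 // => i _.
exact: triv.
Qed.

Lemma sum_Gamma_trivial_only k (Pr : pred (cell C)) (x : chain C) b :
  uniq (idx C k) -> b \in idx C k ->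
  (forall a, a \in idx C k -> Pr a -> forall m, pathsum m.+1 b a = 0) ->
  \sum_(a <- idx C k | Pr a) Gamma M b a *m x a = if Pr b then x b else 0.
Proof.
move=> uniqI bI triv.
rewrite big_mkcond (bigD1_seq b) //= big_seq_cond big1 ?addr0.
  case: ifP => // Prb; rewrite Gamma_trivial_only; last exact: triv.
  by rewrite /= eqxx conform_mx_id mul1mx.
move=> a /andP[aI neq_ab]; case: ifP => // Pra.
rewrite Gamma_trivial_only; last exact: triv.
by rewrite /= (negbTE neq_ab) mul0mx.
Qed.

Lemma ipC_inclM k (z : chain C) :
  ipC k (inclM M z) (inclM M z) = ipCM M k z z.
Proof.
rewrite /ipCM big_mkcond; apply: eq_bigr => a _; rewrite /inclM.
by case: ifP => //; rewrite /ip trmx0 !mul0mx mxE.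
Qed.

Lemma ipC_inclMr k (x y : chain C) : ipC k x (inclM M y) = ipCM M k x y.
Proof.
rewrite /ipCM big_mkcond; apply: eq_bigr => a _; rewrite /inclM.
by case: ifP => //; rewrite /ip mulmx0 mxE.
Qed.

End PathSums.

Section Inclusions.
Context {R : realType} {C : based_data R} {M : rel (cell C)}.
Local Notation rstep := (rstep R C M).

Lemma rstep_from_unmatched {a c} : unmatched M a -> rstep a c -> edge R C a c.
Proof. by move/asboolP/(_ c) => [_ not_Mca] /orP[/andP[]//|]. Qed.

Lemma rstep_to_unmatched {b c} : unmatched M b -> rstep c b -> edge R C c b.
Proof. by move/asboolP/(_ c) => [not_Mbc _] /orP[/andP[]//|]. Qed.

Hypothesis indexI : index_sets R C.

Lemma uniq_idx k : uniq (idx C k).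
Proof. by case: indexI. Qed.

Lemma idx_deg {k c} : c \in idx C k -> deg C c = k.
Proof. by case: indexI => _ ->; move/eqP. Qed.

Hypothesis graded : graded_boundary R C.

Lemma edge_deg {a b} : edge R C a b -> deg C a = (deg C b).+1.
Proof.
rewrite /edge; case: (eqVneq (deg C a) (deg C b).+1) => // ne.
by rewrite graded // eqxx.
Qed.

Hypothesis M_edge : forall a b, M a b -> edge R C a b.
Context {n : nat}.
Hypotheses (n_gt0 : (0 < n)%N) (free : nn1_free M n).
Local Notation below c := (deg C c <= n.-1)%N.

Lemma rstep_deg_below c c' : below c -> rstep c c' -> below c'.
Proof.
move=> le_c /orP[/andP[/edge_deg ? _] | Mc'c]; first lia.
have := free _ _ Mc'c; have := edge_deg (M_edge _ _ Mc'c); lia.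
Qed.

Lemma Phi_inclM x b : b \in idx C n -> Phi M n x b = inclM M x b.
Proof.
move=> bI; rewrite /Phi sum_Gamma_trivial_only ?uniq_idx // => a aI unm_a.
apply: (pathsum_trivial_only (fun c => below c)) => [c c'||c].
- exact: rstep_deg_below.
- by rewrite (idx_deg bI); lia.
- by move/(rstep_from_unmatched unm_a)/edge_deg; rewrite (idx_deg aI); lia.
Qed.

Lemma Psi_unmatched x b :
  b \in idx C n.-1 -> unmatched M b -> Psi M n.-1 x b = x b.
Proof.
move=> bI unm_b; rewrite /Psi sum_Gamma_trivial_only ?uniq_idx // => a aI _.
have below_step c c' : below c -> rstep c c' -> below c' /\ c' != b.
  move=> below_c step; split; first exact: rstep_deg_below step.
  apply/eqP => eq_c'b; move: step below_c; rewrite eq_c'b.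
  by move/(rstep_to_unmatched unm_b)/edge_deg; rewrite (idx_deg bI); lia.
apply: (pathsum_trivial_only (fun c => below c /\ c != b)).
- by move=> c c' [below_c _]; apply: below_step.
- by case=> _; rewrite eqxx.
- by move=> c; apply: below_step; rewrite (idx_deg aI).
Qed.

End Inclusions.

Theorem mainTheorem11 (R : realType) (C : based_data R) (M : rel (cell C))
  (n : nat) :
  based_complex C -> morse_matching M -> (0 < n)%N -> nn1_free M n ->
  (* (1) Phi_n is the subspace inclusion C^M_n -> C_n, hence an isometry *)
  ((forall (x : chain C) (b : cell C), b \in idx C n ->
       Phi M n x b = inclM M x b) /\
   (forall x : chain C, ipC n (Phi M n x) (Phi M n x) = ipCM M n x x)) /\
  (* (2) Psi_{n-1}^dagger is the subspace inclusion C^M_{n-1} -> C_{n-1},  *)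
  (*     hence an isometry                                                  *)
  (is_adjoint (ipC n.-1) (ipCM M n.-1) (Psi M n.-1) (inclM M) /\
   (forall z : chain C, ipC n.-1 (inclM M z) (inclM M z) = ipCM M n.-1 z z)).
Proof.
move=> [indexI _ graded _] [M_edge _ _ _] n_gt0 free.
have Phi_incl := Phi_inclM indexI graded M_edge n_gt0 free.
split; first split=> // x.
  by rewrite -ipC_inclM; apply: eq_big_seq => b bI; rewrite Phi_incl.
split=> [x y|]; last exact: ipC_inclM.
rewrite ipC_inclMr /ipCM big_seq_cond [RHS]big_seq_cond.
apply: eq_bigr => b /andP[bI unm_b].
by rewrite (Psi_unmatched indexI graded M_edge n_gt0 free).
Qed.
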